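(* Let $O$ be a unitary operator and $P$ a self-adjoint orthogonal projection on a finite-dimensional Hilbert space such that $(\mathrm{Id}-P)O=\mathrm{Id}-P$. Then for any vector $\varphi$ and any density matrix $\sigma$, $$\left|\langle\varphi,(O\sigma O^\dagger-\sigma)\varphi\rangle\right|\leq 2\lVert P\varphi\rVert\,\lVert\varphi\rVert\left(\mathrm{tr}\bigl((O\sigma O^\dagger-\sigma)^2\bigr)\right)^{1/2}.$$ *)

From HB Require Import structures.
From mathcomp Require Import all_boot all_order all_algebra.
Set Implicit Arguments. Unset Strict Implicit. Unset Printing Implicit Defensive.
Import Order.TTheory GRing.Theory Num.Theory.
Local Open Scope ring_scope.

(* Finite-dimensional complex Hilbert space C^n, C a numClosedFieldType
   (e.g. algC or complex R), standard inner product <x,y> = x^* y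
   (antilinear in the first argument). *)

Definition adjmx (C : numClosedFieldType) m n (A : 'M[C]_(m, n)) : 'M[C]_(n, m) :=
  (map_mx Num.conj A)^T.

Definition inner (C : numClosedFieldType) n (x y : 'cV[C]_n) : C :=
  (adjmx x *m y) 0 0.

Definition vnorm (C : numClosedFieldType) n (x : 'cV[C]_n) : C :=
  sqrtC (inner x x).

Definition unitary (C : numClosedFieldType) n (O : 'M[C]_n) : Prop :=
  O *m adjmx O = 1%:M /\ adjmx O *m O = 1%:M.

Definition sa_projection (C : numClosedFieldType) n (P : 'M[C]_n) : Prop :=
  P *m P = P /\ adjmx P = P.

Definition density_matrix (C : numClosedFieldType) n (s : 'M[C]_n) : Prop :=
  [/\ adjmx s = s, (forall v : 'cV[C]_n, 0 <= inner v (s *m v)) & \tr s = 1].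

From HB Require Import structures.
From mathcomp Require Import all_boot all_order all_algebra.
From mathcomp Require Import ring.
Import Order.TTheory GRing.Theory Num.Theory.
Local Open Scope ring_scope.

(* Write phi = p + q with p = P phi and q = (1 - P) phi, and let
   D = O sigma O^+ - sigma.  Since (1 - P) O = 1 - P, also O^+ (1 - P) = 1 - P,
   so the compression (1 - P) D (1 - P) vanishes and
   <phi, D phi> = <p, D phi> + <q, D p>.  Both terms are bounded by
   Cauchy-Schwarz together with the Hilbert-Schmidt bound
   |D x| <= tr(D^+ D)^(1/2) |x|, using |q| <= |phi| and D^+ = D. *)

Lemma Cauchy_Schwarz_real {R : numDomainType} {n} (a b : 'I_n -> R) :
  (forall i, a i \is Num.real) -> (forall i, b i \is Num.real) ->
  (\sum_i a i * b i) ^+ 2 <= (\sum_i a i ^+ 2) * (\sum_i b i ^+ 2).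
Proof.
move=> a_real b_real.
have sumaa_bb : \sum_i \sum_j a i ^+ 2 * b j ^+ 2
    = (\sum_i a i ^+ 2) * (\sum_i b i ^+ 2).
  by rewrite big_distrl /=; apply: eq_bigr => i _; rewrite big_distrr.
have sumab_ab : \sum_i \sum_j (a i * b i) * (a j * b j) = (\sum_i a i * b i) ^+ 2.
  by rewrite expr2 big_distrl /=; apply: eq_bigr => i _; rewrite big_distrr.
have Lagrange : \sum_i \sum_j (a i * b j - a j * b i) ^+ 2
    = 2 * ((\sum_i a i ^+ 2) * (\sum_i b i ^+ 2) - (\sum_i a i * b i) ^+ 2).
  transitivity (\sum_i \sum_j a i ^+ 2 * b j ^+ 2
      + \sum_i \sum_j a j ^+ 2 * b i ^+ 2
      - 2 * \sum_i \sum_j (a i * b i) * (a j * b j)).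
    rewrite mulr_sumr -big_split -sumrB; apply: eq_bigr => i _ /=.
    rewrite mulr_sumr -big_split -sumrB; apply: eq_bigr => j _ /=.
    ring.
  by rewrite [in X in X + _]sumaa_bb exchange_big sumaa_bb sumab_ab; ring.
have : 0 <= \sum_i \sum_j (a i * b j - a j * b i) ^+ 2.
  apply: sumr_ge0 => i _; apply: sumr_ge0 => j _.
  by rewrite -real_normK ?exprn_ge0 // rpredB ?rpredM.
by rewrite Lagrange pmulr_rge0 // subr_ge0.
Qed.

Lemma Cauchy_Schwarz_conjC {C : numClosedFieldType} {n} (f g : 'I_n -> C) :
  `|\sum_i (f i)^* * g i| ^+ 2 <= (\sum_i `|f i| ^+ 2) * (\sum_i `|g i| ^+ 2).
Proof.
have := Cauchy_Schwarz_real (fun i => `|f i|) (fun i => `|g i|)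
  (fun i => normr_real _) (fun i => normr_real _).
apply: le_trans.
rewrite ler_pXn2r ?nnegrE ?sumr_ge0 // => [|i _]; last by rewrite mulr_ge0.
under [X in _ <= X]eq_bigr => i _ do rewrite -norm_conjC -normrM.
exact: ler_norm_sum.
Qed.

Section FiniteHilbertSpace.

Set Implicit Arguments.
Unset Strict Implicit.

Variable C : numClosedFieldType.

Lemma adjmxK m n (A : 'M[C]_(m, n)) : adjmx (adjmx A) = A.
Proof. by apply/matrixP => i j; rewrite !mxE conjCK. Qed.

Lemma adjmxD m n (A B : 'M[C]_(m, n)) : adjmx (A + B) = adjmx A + adjmx B.
Proof. by apply/matrixP => i j; rewrite !mxE rmorphD. Qed.

Lemma adjmxB m n (A B : 'M[C]_(m, n)) : adjmx (A - B) = adjmx A - adjmx B.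
Proof. by apply/matrixP => i j; rewrite !mxE rmorphB. Qed.

Lemma adjmxM m n p (A : 'M[C]_(m, n)) (B : 'M[C]_(n, p)) :
  adjmx (A *m B) = adjmx B *m adjmx A.
Proof. by rewrite /adjmx map_mxM trmx_mul. Qed.

Lemma adjmx1 n : adjmx (1%:M : 'M[C]_n) = 1%:M.
Proof. by rewrite /adjmx map_mx1 trmx1. Qed.

Lemma innerE n (x y : 'cV[C]_n) : inner x y = \sum_i (x i 0)^* * y i 0.
Proof. by rewrite /inner !mxE; apply: eq_bigr => i _; rewrite !mxE. Qed.

Lemma inner_selfE n (x : 'cV[C]_n) : inner x x = \sum_i `|x i 0| ^+ 2.
Proof. by rewrite innerE; apply: eq_bigr => i _; rewrite normCK mulrC. Qed.

Lemma inner_self_ge0 n (x : 'cV[C]_n) : 0 <= inner x x.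
Proof. by rewrite inner_selfE sumr_ge0 // => i _; rewrite exprn_ge0. Qed.

Lemma vnorm_ge0 n (x : 'cV[C]_n) : 0 <= vnorm x.
Proof. by rewrite sqrtC_ge0 inner_self_ge0. Qed.

Lemma innerDl n (x y z : 'cV[C]_n) : inner (x + y) z = inner x z + inner y z.
Proof. by rewrite /inner adjmxD mulmxDl mxE. Qed.

Lemma innerDr n (x y z : 'cV[C]_n) : inner x (y + z) = inner x y + inner x z.
Proof. by rewrite /inner mulmxDr mxE. Qed.

Lemma inner0r n (x : 'cV[C]_n) : inner x 0 = 0.
Proof. by rewrite /inner mulmx0 mxE. Qed.

Lemma inner_mulmxl n (A : 'M[C]_n) (x y : 'cV[C]_n) :
  inner (A *m x) y = inner x (adjmx A *m y).
Proof. by rewrite /inner adjmxM mulmxA. Qed.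

Lemma inner_Cauchy_Schwarz n (x y : 'cV[C]_n) : `|inner x y| <= vnorm x * vnorm y.
Proof.
rewrite -sqrtCM ?nnegrE ?inner_self_ge0 // -(sqrCK (normr_ge0 _)).
rewrite ler_sqrtC ?nnegrE ?exprn_ge0 ?mulr_ge0 ?inner_self_ge0 //.
by rewrite !inner_selfE innerE Cauchy_Schwarz_conjC.
Qed.

Lemma tr_adjmx_mulmx n (A : 'M[C]_n) :
  \tr (adjmx A *m A) = \sum_i \sum_j `|A i j| ^+ 2.
Proof.
rewrite /mxtrace exchange_big; apply: eq_bigr => k _.
by rewrite mxE; apply: eq_bigr => i _; rewrite !mxE normCK mulrC.
Qed.

Lemma vnorm_mulmx_le n (A : 'M[C]_n) (x : 'cV[C]_n) :
  vnorm (A *m x) <= sqrtC (\tr (adjmx A *m A)) * vnorm x.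
Proof.
have tr_ge0 : 0 <= \tr (adjmx A *m A).
  rewrite tr_adjmx_mulmx; apply: sumr_ge0 => i _.
  by apply: sumr_ge0 => j _; apply: exprn_ge0.
rewrite -sqrtCM ?nnegrE ?inner_self_ge0 //.
rewrite ler_sqrtC ?nnegrE ?mulr_ge0 ?inner_self_ge0 //.
rewrite inner_selfE tr_adjmx_mulmx big_distrl /=; apply: ler_sum => i _.
have := Cauchy_Schwarz_conjC (fun j => (A i j)^*) (fun j => x j 0).
have -> : \sum_j (A i j)^*^* * x j 0 = \sum_j A i j * x j 0.
  by apply: eq_bigr => j _; rewrite conjCK.
have -> : \sum_j `|(A i j)^*| ^+ 2 = \sum_j `|A i j| ^+ 2.
  by apply: eq_bigr => j _; rewrite norm_conjC.
by rewrite -inner_selfE mxE.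
Qed.

Lemma sa_projection_compl n (P : 'M[C]_n) :
  sa_projection P -> sa_projection (1%:M - P).
Proof.
move=> [PP Pa]; split; last by rewrite adjmxB adjmx1 Pa.
by rewrite mulmxBl mul1mx mulmxBr mulmx1 PP subrr subr0.
Qed.

Lemma vnorm_proj_le n (P : 'M[C]_n) (x : 'cV[C]_n) :
  sa_projection P -> vnorm (P *m x) <= vnorm x.
Proof.
move=> Pproj; have [PP Pa] := Pproj; have [QQ Qa] := sa_projection_compl Pproj.
have Pythagoras : inner x x
    = inner (P *m x) (P *m x) + inner ((1%:M - P) *m x) ((1%:M - P) *m x).
  rewrite !inner_mulmxl Pa Qa !mulmxA PP QQ -innerDr -mulmxDl addrC subrK.
  by rewrite mul1mx.
by rewrite ler_sqrtC ?nnegrE ?inner_self_ge0 // Pythagoras lerDl inner_self_ge0.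
Qed.

Lemma compress_conjmx_subr n (Q O s : 'M[C]_n) :
  Q *m O = Q -> adjmx O *m Q = Q -> Q *m (O *m s *m adjmx O - s) *m Q = 0.
Proof.
by move=> QO OQ; rewrite mulmxBr mulmxBl !mulmxA QO -!mulmxA OQ subrr.
Qed.

Lemma inner_split_compressed n (P D : 'M[C]_n) (x : 'cV[C]_n) :
  sa_projection P -> (1%:M - P) *m D *m (1%:M - P) = 0 ->
  inner x (D *m x)
    = inner (P *m x) (D *m x) + inner ((1%:M - P) *m x) (D *m (P *m x)).
Proof.
move=> Pproj QDQ; have [_ Qa] := sa_projection_compl Pproj.
have xE : x = P *m x + (1%:M - P) *m x by rewrite -mulmxDl addrC subrK mul1mx.
have qDq : inner ((1%:M - P) *m x) (D *m ((1%:M - P) *m x)) = 0.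
  by rewrite inner_mulmxl Qa !mulmxA QDQ mul0mx inner0r.
rewrite {1}xE innerDl; congr (_ + _).
by rewrite {2}xE mulmxDr innerDr qDq addr0.
Qed.

Lemma inner_compressed_le n (P D : 'M[C]_n) (x : 'cV[C]_n) :
  sa_projection P -> adjmx D = D -> (1%:M - P) *m D *m (1%:M - P) = 0 ->
  `|inner x (D *m x)| <= 2 * vnorm (P *m x) * vnorm x * sqrtC (\tr (D *m D)).
Proof.
move=> Pproj Da QDQ; set H := sqrtC _.
have Dx_le y : vnorm (D *m y) <= H * vnorm y by rewrite /H -{2}Da vnorm_mulmx_le.
have qx_le : vnorm ((1%:M - P) *m x) <= vnorm x.
  exact/vnorm_proj_le/sa_projection_compl.
rewrite (inner_split_compressed _ Pproj QDQ).
rewrite (_ : 2 * _ * _ * H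
           = vnorm (P *m x) * (H * vnorm x) + vnorm x * (H * vnorm (P *m x)));
  last by ring.
apply: le_trans (ler_normD _ _) (lerD _ _).
  apply: le_trans (inner_Cauchy_Schwarz _ _) _.
  exact: ler_wpM2l (vnorm_ge0 _) _ _ (Dx_le x).
apply: le_trans (inner_Cauchy_Schwarz _ _) _.
exact: ler_pM (vnorm_ge0 _) (vnorm_ge0 _) qx_le (Dx_le _).
Qed.

End FiniteHilbertSpace.

Theorem lemma3 (C : numClosedFieldType) (n : nat) (O P sigma : 'M[C]_n)
  (phi : 'cV[C]_n) :
  unitary O -> sa_projection P -> (1%:M - P) *m O = 1%:M - P ->
  density_matrix sigma ->
  `| inner phi ((O *m sigma *m adjmx O - sigma) *m phi) |
    <= 2 * vnorm (P *m phi) * vnorm phi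
         * sqrtC (\tr ((O *m sigma *m adjmx O - sigma) *m
                       (O *m sigma *m adjmx O - sigma))).
Proof.
move=> _ Pproj QO [sigma_sa _ _].
have [_ Qa] := sa_projection_compl Pproj.
have OQ : adjmx O *m (1%:M - P) = 1%:M - P by rewrite -{1}Qa -adjmxM QO.
apply: inner_compressed_le => //; last exact: compress_conjmx_subr.
by rewrite adjmxB !adjmxM adjmxK sigma_sa mulmxA.
Qed.
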